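(* Let $\succ=(\succ_s)_{s\in S}$ be a priority profile in which every $\succ_s$ is a weak order on $I$. Then $$f^{\succ}\subseteq\bigcup_{\succ'\in\mathcal{E}^c(\succ)}f^{\succ'},$$ i.e., every student optimal stable matching for $\succ$ is the (unique) student optimal stable matching for some extension profile obtained via a single tiebreaking rule.
   Context: A weak order on $I$ is an asymmetric, transitive and negatively transitive ($(x,y)\notin B$ and $(y,z)\notin B$ imply $(x,z)\notin B$) relation; a total order is a complete weak order. School choice setup: $I$ is a finite set of students with $|I|\ge 3$, $S$ a finite set of schools. Each student $i$ has a total order $P_i$ on $S\cup\{\emptyset\}$; $sR_is'$ means $sP_is'$ or $s=s'$. Each school $s$ has capacity $q_s\in\mathbb{Z}_{++}$ and an asymmetric priority relation $\succ_s$ on $I$. A matching $\mu$ assigns each $i$ to $\mu(i)\in S\cup\{\emptyset\}$, $\mu(s)=\{i:\mu(i)=s\}$, $|\mu(s)|\le q_s$. $\mu$ is stable for $\succ$ if individually rational ($\mu(i)R_i\emptyset$), non-wasteful ($sP_i\mu(i)$ implies $|\mu(s)|=q_s$) and fair (no $s$, $j\in\mu(s)$, $i\notin\mu(s)$ with $sR_i\mu(i)$ and $(i,j)\in\succ_s$). Pareto dominance: $\mu'(i)R_i\mu(i)$ for all $i$, strict for some $i$. An SOSM for $\succ$ is a stable matching not Pareto dominated by any stable matching; $f^\succ$ is the set of SOSMs. Maximal set: $M(I',\succ_s)=\{i\in I':(j,i)\notin\succ_s\ \forall j\in I'\setminus\{i\}\}$. For bijections $r_s:I\to\{1,\dots,|I|\}$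 and $\tau=(r_s)_{s\in S}$, the $\tau$ tiebreaking SMO algorithm constructs, for each $s$, a total order $\succ'_s: i_1\,i_2\cdots i_{|I|}$ (meaning $(i_t,i_{t'})\in\succ'_s$ iff $t<t'$) where at step $t=1,\dots,|I|$, $i_t$ is the element of $M(I\setminus\{i_1,\dots,i_{t-1}\},\succ_s)$ with smallest $r_s$-value. $\tau$ is a single tiebreaking rule if $r_s=r_{s'}$ for all $s,s'\in S$. $\mathcal{E}^c(\succ)$ is the set of profiles $(\succ'_s)_{s\in S}$ obtained by the $\tau$ tiebreaking SMO algorithm for some single tiebreaking rule $\tau$. *)

(* School choice: students I, schools S (finTypes);
   "no school" (the empty assignment) is [None : option S]. *)
From mathcomp Require Import all_boot.
Set Implicit Arguments. Unset Strict Implicit. Unset Printing Implicit Defensive.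

Section SchoolChoice.
Variables (I S : finType).

Definition asymmetric {T : Type} (B : rel T) := forall x y, B x y -> ~~ B y x.
Definition transitive_rel {T : Type} (B : rel T) := forall x y z, B x y -> B y z -> B x z.
Definition neg_transitive {T : Type} (B : rel T) :=
  forall x y z, ~~ B x y -> ~~ B y z -> ~~ B x z.
Definition weak_order {T : Type} (B : rel T) :=
  [/\ asymmetric B, transitive_rel B & neg_transitive B].
Definition complete_rel {T : eqType} (B : rel T) := forall x y, x != y -> B x y \/ B y x.
Definition total_order {T : eqType} (B : rel T) := weak_order B /\ complete_rel B.

Definition Rpref (P : I -> rel (option S)) (i : I) (a b : option S) : bool :=
  P i a b || (a == b).

Definition assigned (mu : I -> option S) (s : S) : {set I} :=
  [set i | mu i == Some s].

Definition is_matching (q : S -> nat) (mu : I -> option S) : Prop :=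
  forall s, #|assigned mu s| <= q s.

Definition stable (P : I -> rel (option S)) (q : S -> nat) (pr : S -> rel I)
  (mu : I -> option S) : Prop :=
  [/\ is_matching q mu,
      forall i, Rpref P i (mu i) None,
      forall i s, P i (Some s) (mu i) -> #|assigned mu s| = q s &
      ~ (exists s i j, [/\ j \in assigned mu s, i \notin assigned mu s,
                          Rpref P i (Some s) (mu i) & pr s i j])].

Definition pareto_dominates (P : I -> rel (option S)) (mu' mu : I -> option S) : Prop :=
  (forall i, Rpref P i (mu' i) (mu i)) /\ (exists i, P i (mu' i) (mu i)).

(* SOSM: stable and not Pareto dominated by any stable matching;
   [is_SOSM P q pr mu] means mu ∈ f^pr. *)
Definition is_SOSM (P : I -> rel (option S)) (q : S -> nat) (pr : S -> rel I)
  (mu : I -> option S) : Prop :=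
  stable P q pr mu /\
  ~ (exists mu', stable P q pr mu' /\ pareto_dominates P mu' mu).

Definition maxset (A : {set I}) (B : rel I) : {set I} :=
  [set i in A | [forall j in A, (j != i) ==> ~~ B j i]].

Fixpoint smo_seq (r : I -> nat) (B : rel I) (n : nat) (A : {set I}) : seq I :=
  match n with
  | 0 => [::]
  | n'.+1 =>
      match [pick i in maxset A B | [forall j in maxset A B, r i <= r j]] with
      | Some i => i :: smo_seq r B n' (A :\ i)
      | None => [::]
      end
  end.

Definition smo_order (r : I -> nat) (B : rel I) : rel I :=
  fun i j => index i (smo_seq r B #|I| [set: I]) < index j (smo_seq r B #|I| [set: I]).

Definition ranking (r : I -> nat) : Prop :=
  injective r /\ (forall i, 1 <= r i <= #|I|).

Definition single_tiebreak (r : I -> nat) (pr : S -> rel I) : S -> rel I :=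
  fun s => smo_order r (pr s).

End SchoolChoice.

(* Let mu be an SOSM.  Say that i envies j when j holds a seat at a school s
   that i prefers to mu i, and j does not have strictly higher priority than i
   at s.  If some nonempty set of students had no member envying nobody else
   in it, following envy would produce a cycle; letting everyone on the cycle
   take the seat of the student they envy yields a stable matching Pareto
   dominating mu.  Hence the "envied by" relation has maximal elements in
   every nonempty set, and running the SMO algorithm with a constant
   tiebreaker on it gives a topological ranking r: i envies j implies
   r j < r i.  The single tiebreaking rule r refines every priority relation,
   so stable matchings for the refined profile are stable for the original
   one; conversely ties are broken against envious students, so mu stays
   stable.  Minimality under Pareto dominance then transfers as well. *)

From Pilot Require Import Defs.
From mathcomp Require Import all_boot.
Set Implicit Arguments. Unset Strict Implicit. Unset Printing Implicit Defensive.

(* Relations for which every nonempty set has a maximal element; on a finite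
   type this says B has no cycle through two or more distinct elements, and
   it is what keeps the SMO algorithm going. *)
Definition has_maximals (I : finType) (B : rel I) : Prop :=
  forall A : {set I}, A != set0 -> exists k, k \in Defs.maxset A B.

(* Asymmetric transitive relations have maximals:
   an element of A with the fewest predecessors in A has none. *)
Lemma strict_order_has_maximals (I : finType) (B : rel I) :
  asymmetric B -> transitive_rel B -> has_maximals B.
Proof.
move=> Basym Btr A /set0Pn [i0 i0A].
have [m mA m_min] :=
  @arg_minnP _ i0 (fun i => i \in A) (fun i => #|[set k in A | B k i]|) i0A.
exists m; rewrite inE mA /=.
apply/forallP => k; apply/implyP => kA; apply/implyP => _; apply/negP => Bkm.
have := m_min k kA; rewrite leqNgt => /negP; apply; apply: proper_card.
apply/properP; split.
  by apply/subsetP => x; rewrite !inE => /andP[-> Bxk]; exact: Btr Bxk Bkm.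
exists k; first by rewrite inE kA Bkm.
by rewrite inE kA /=; apply/negP => Bkk; move: (Basym _ _ Bkk); rewrite Bkk.
Qed.

Lemma weak_order_has_maximals (I : finType) (B : rel I) :
  weak_order B -> has_maximals B.
Proof. by case=> Basym Btr _; exact: strict_order_has_maximals. Qed.

Section SMO.
Variables (I : finType) (r : I -> nat) (B : rel I).

Lemma smo_seq_sub n (A : {set I}) : {subset smo_seq r B n A <= A}.
Proof.
elim: n A => [|n IH] A //=.
case: pickP => [k /andP[kM _]|_] // x; rewrite inE => /orP[/eqP->|/IH].
  by move: kM; rewrite inE => /andP[].
by rewrite in_setD1 => /andP[].
Qed.

Lemma smo_seq_uniq n (A : {set I}) : uniq (smo_seq r B n A).
Proof.
elim: n A => [|n IH] A //=; case: pickP => [k _|_] //=.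
by rewrite IH andbT; apply/negP => /smo_seq_sub; rewrite in_setD1 eqxx.
Qed.

Lemma smo_seq_cover : has_maximals B ->
  forall n (A : {set I}), #|A| <= n -> {subset A <= smo_seq r B n A}.
Proof.
move=> Bmax; elim=> [|n IH] A An x xA.
  by move: An; rewrite leqn0 cards_eq0 => /eqP A0; rewrite A0 inE in xA.
have [k0 k0M] : exists k, k \in Defs.maxset A B by apply/Bmax/set0Pn; exists x.
rewrite /=; case: pickP => [k /andP[kM _] | no_pick].
  rewrite inE; case: (eqVneq x k) => [//|xk] /=.
  have kA : k \in A by move: kM; rewrite inE => /andP[].
  by apply: IH; [move: An; rewrite (cardsD1 k) kA | rewrite in_setD1 xk].
have [m mM m_min] := @arg_minnP _ k0 (fun k => k \in Defs.maxset A B) r k0M.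
suff : false by [].
rewrite -(no_pick m) mM /=.
by apply/forallP => l; apply/implyP; exact: m_min.
Qed.

Lemma smo_seq_precede n (A : {set I}) i j :
  (forall A' : {set I}, i \in A' -> j \in A' -> i != j ->
     i \in Defs.maxset A' B -> [forall l in Defs.maxset A' B, r i <= r l] ->
     False) ->
  i \in A -> j \in A -> index j (smo_seq r B n A) <= index i (smo_seq r B n A).
Proof.
move=> never_i; elim: n A => [|n IH] A iA jA //=.
case: pickP => [k /andP[kM k_min]|_] //=.
case: (eqVneq k j) => [//|kj]; case: (eqVneq k i) => [ki|ki].
  by subst k; case: (never_i A iA jA kj kM k_min).
by rewrite ltnS; apply: IH; rewrite in_setD1 ?iA ?jA eq_sym ?ki ?kj.
Qed.

Hypothesis Bmax : has_maximals B.

Lemma smo_seq_full x : x \in smo_seq r B #|I| [set: I].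
Proof. by apply: smo_seq_cover; rewrite ?cardsT ?in_setT. Qed.

(* Since every student is listed exactly once, precedence is strict. *)
Lemma smo_order_of_precede i j :
  i != j ->
  index i (smo_seq r B #|I| [set: I]) <= index j (smo_seq r B #|I| [set: I]) ->
  smo_order r B i j.
Proof.
move=> ij le_ij; rewrite /smo_order ltn_neqAle le_ij andbT.
by apply: contra ij => /eqP /(index_inj _ (smo_seq_full i) (smo_seq_full j)) ->.
Qed.

Lemma smo_order_refines i j : i != j -> B i j -> smo_order r B i j.
Proof.
move=> ij Bij; apply: smo_order_of_precede => //.
apply: smo_seq_precede; rewrite ?in_setT // => A' jA iA ji jM _.
by move: jM; rewrite inE => /andP[_ /forallP /(_ i)]; rewrite iA ij Bij.
Qed.

Lemma smo_order_tiebreak i j :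
  i != j -> ~~ B j i -> (forall k, B k i -> B k j) -> r i < r j ->
  smo_order r B i j.
Proof.
move=> ij nBji above_i r_ij; apply: smo_order_of_precede => //.
apply: smo_seq_precede; rewrite ?in_setT // => A' jA iA _ jM j_min.
have iM : i \in Defs.maxset A' B.
  rewrite inE iA; apply/forallP => k; apply/implyP => kA; apply/implyP => ki.
  apply/negP => Bki; have Bkj := above_i k Bki.
  have kj : k != j by apply: contraNneq nBji => <-.
  by move: jM; rewrite inE => /andP[_ /forallP /(_ k)]; rewrite kA kj Bkj.
by move/forallP: j_min => /(_ i); rewrite iM leqNgt r_ij.
Qed.

End SMO.

Lemma single_tiebreak_refines (I S : finType) (pr : S -> rel I) (r : I -> nat)
  s i j :
  weak_order (pr s) -> pr s i j -> single_tiebreak r pr s i j.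
Proof.
move=> pr_weak prij; have [pr_asym _ _] := pr_weak.
have ij : i != j.
  by apply/eqP => ij; move: (pr_asym _ _ prij); rewrite ij -{1}ij prij.
exact: (smo_order_refines r (weak_order_has_maximals pr_weak)) ij prij.
Qed.

Lemma topological_ranking (I : finType) (B : rel I) :
  has_maximals B -> (forall i, ~~ B i i) ->
  exists r : I -> nat, ranking r /\ forall i j, B i j -> r i < r j.
Proof.
move=> Bmax Birr; pose r0 : I -> nat := fun=> 0.
pose t := smo_seq r0 B #|I| [set: I].
exists (fun i => (index i t).+1); split; last first.
  move=> i j Bij; rewrite ltnS; apply: (smo_order_refines r0 Bmax) => //.
  by apply/eqP => ij; move: Bij; rewrite ij (negbTE (Birr j)).
split => [i j [] /(index_inj _ (smo_seq_full r0 Bmax i)) -> //|i].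
  exact: smo_seq_full.
apply: leq_trans (max_card (mem t)).
by rewrite (card_uniqP (smo_seq_uniq _ _ _ _)) index_mem smo_seq_full.
Qed.

(* A nonempty set closed under f contains a nonempty set that f permutes:
   take a smallest nonempty closed subset. *)
Lemma closed_set_has_cycle (T : finType) (f : T -> T) (A : {set T}) :
  A != set0 -> f @: A \subset A ->
  exists C : {set T}, [/\ C \subset A, C != set0 & f @: C = C].
Proof.
move=> An fA.
pose closed (C : {set T}) := [&& C \subset A, C != set0 & f @: C \subset C].
have [C /and3P[CA Cn fC] C_min] :=
  arg_minnP (fun C : {set T} => #|C|)
            (introT and3P (And3 (subxx A) An fA) : closed A).
exists C; split=> //; apply/eqP; rewrite eqEcard fC C_min //.
rewrite /closed (subset_trans fC CA) imsetS // andbT /=; case/set0Pn: Cn => x xC.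
by apply/set0Pn; exists (f x); exact: imset_f.
Qed.

(* Refining the priorities can only remove blocking pairs of the original
   profile, so stability for the refinement implies stability. *)
Lemma stable_coarsen (I S : finType) (P : I -> rel (option S)) (q : S -> nat)
  (pr pr' : S -> rel I) (mu : I -> option S) :
  (forall s i j, pr s i j -> pr' s i j) -> stable P q pr' mu -> stable P q pr mu.
Proof.
move=> pr_sub [Hm HIR HNW Hfair]; split=> // [[s [i [j [ja ia Ri prij]]]]].
by apply: Hfair; exists s, i, j; split; rewrite ?pr_sub.
Qed.

Lemma SOSM_refine (I S : finType) (P : I -> rel (option S)) (q : S -> nat)
  (pr pr' : S -> rel I) (mu : I -> option S) :
  (forall s i j, pr s i j -> pr' s i j) ->
  is_SOSM P q pr mu -> stable P q pr' mu -> is_SOSM P q pr' mu.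
Proof.
move=> pr_sub [_ undominated] st'; split=> // [[mu' [st_mu' dom]]].
by apply: undominated; exists mu'; split=> //; exact: stable_coarsen st_mu'.
Qed.

Definition trade (I S : finType) (mu : I -> option S) (C : {set I}) (f : I -> I) :
  I -> option S := fun x => if x \in C then mu (f x) else mu x.

Lemma trade_assigned_card (I S : finType) (mu : I -> option S) (C : {set I})
  (f : I -> I) s :
  f @: C = C -> {in C &, injective f} ->
  #|assigned (trade mu C f) s| = #|assigned mu s|.
Proof.
move=> fCC finj.
rewrite -(cardsID C (assigned _ s)) -(cardsID C (assigned mu s)); congr (_ + _).
  rewrite -(card_in_imset (f := f)); last first.
    by move=> x y /setIP[_ xC] /setIP[_ yC]; exact: finj.
  apply: eq_card => y; apply/imsetP/setIP.
    move=> [x /setIP[xa xC] ->]; split; last by rewrite -fCC imset_f.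
    by move: xa; rewrite !inE /trade xC.
  move=> [ya]; rewrite -{1}fCC => /imsetP [x xC yfx]; subst y.
  by exists x => //; move: ya; rewrite !inE /trade xC andbT.
by apply: eq_card => y; rewrite !inE /trade; case: (y \in C).
Qed.

Section Envy.
Variables (I S : finType) (P : I -> rel (option S)) (q : S -> nat) (pr : S -> rel I).
Hypothesis P_total : forall i, total_order (P i).
Hypothesis pr_weak : forall s, weak_order (pr s).

Lemma P_irrefl i a : ~~ P i a a.
Proof.
case: (P_total i) => [[Pasym _ _] _].
by apply/negP => Paa; move: (Pasym _ _ Paa); rewrite Paa.
Qed.

Lemma P_R_trans i a b c : P i a b -> Rpref P i b c -> P i a c.
Proof. by case: (P_total i) => [[_ Ptr _] _] Pab /orP[/(Ptr _ _ _ Pab)|/eqP<-]. Qed.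

Lemma R_trans i a b c : Rpref P i a b -> Rpref P i b c -> Rpref P i a c.
Proof. by move=> /orP[Pab Rbc|/eqP->//]; rewrite /Rpref (P_R_trans Pab Rbc). Qed.

Lemma R_not_assigned (mu : I -> option S) i s :
  Rpref P i (Some s) (mu i) -> i \notin assigned mu s -> P i (Some s) (mu i).
Proof. by case/orP=> // /eqP E; rewrite inE -E eqxx. Qed.

Definition envy (mu : I -> option S) (i j : I) : bool :=
  [exists s, (mu j == Some s) && P i (Some s) (mu i) && ~~ pr s j i].

Definition envied (mu : I -> option S) : rel I := fun j i => envy mu i j.

Lemma envy_irrefl mu i : ~~ envy mu i i.
Proof.
by apply/existsP => -[s /andP[/andP[/eqP E]]]; rewrite E (negbTE (P_irrefl _ _)).
Qed.

Section Trade.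
Variables (mu : I -> option S) (C : {set I}) (f : I -> I).
Hypotheses (mu_stable : stable P q pr mu)
           (C_envy : forall x, x \in C -> envy mu x (f x)).
Hypotheses (fCC : f @: C = C) (finj : {in C &, injective f}).

Lemma trade_improves x : x \in C -> P x (trade mu C f x) (mu x).
Proof.
move=> xC; rewrite /trade xC.
by case/existsP: (C_envy xC) => s /andP[/andP[/eqP ->]].
Qed.

Lemma trade_weakly_improves x : Rpref P x (trade mu C f x) (mu x).
Proof.
case xC: (x \in C); first by rewrite /Rpref trade_improves.
by rewrite /Rpref /trade xC eqxx orbT.
Qed.

(* Trading along envy preserves stability: a student seated by the trade at s
   has no strict priority over anyone who envied the seat's former holder. *)
Lemma trade_stable : stable P q pr (trade mu C f).
Proof.
have [cap HIR HNW Hfair] := mu_stable.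
have card_eq s := trade_assigned_card mu s fCC finj.
split=> [s|i|i s Pis|[s [i [j [ja ia Ri prij]]]]].
- by rewrite card_eq; exact: cap.
- exact: R_trans (trade_weakly_improves i) (HIR i).
- rewrite card_eq; apply: HNW.
  exact: P_R_trans Pis (trade_weakly_improves i).
have Pis : P i (Some s) (mu i).
  exact: P_R_trans (R_not_assigned Ri ia) (trade_weakly_improves i).
have ia' : i \notin assigned mu s.
  by rewrite inE; apply: contraTN Pis => /eqP ->; exact: P_irrefl.
have Ri' : Rpref P i (Some s) (mu i) by rewrite /Rpref Pis.
move: ja; rewrite inE /trade; case jC: (j \in C) => /eqP ja; last first.
  by apply: Hfair; exists s, i, j; split=> //; rewrite inE ja.
case/existsP: (C_envy jC) => s' /andP[/andP[/eqP]]; rewrite ja => -[<-] _ nprfj.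
have prif : pr s i (f j).
  apply/negPn/negP => nprif; have [_ _ prNtr] := pr_weak s.
  by move: (prNtr _ _ _ nprif nprfj); rewrite prij.
by apply: Hfair; exists s, i, (f j); split=> //; rewrite inE ja.
Qed.

Lemma trade_dominates : C != set0 -> pareto_dominates P (trade mu C f) mu.
Proof.
move=> /set0Pn [x xC]; split; first exact: trade_weakly_improves.
by exists x; exact: trade_improves.
Qed.

End Trade.

(* For an SOSM, every nonempty set contains a student envying nobody in it:
   otherwise an envy cycle would give a Pareto improving stable trade. *)
Lemma envied_has_maximals mu : is_SOSM P q pr mu -> has_maximals (envied mu).
Proof.
move=> [mu_stable undominated] A An.
have [/set0Pn //|/negPn/eqP M0] := boolP (Defs.maxset A (envied mu) != set0).
pose f i := odflt i [pick j in A | envy mu i j].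
have f_envy i : i \in A -> f i \in A /\ envy mu i (f i).
  move=> iA; rewrite /f; case: pickP => [j /andP[jA e]|none] //=; exfalso.
  have : i \notin Defs.maxset A (envied mu) by rewrite M0 inE.
  rewrite inE iA => /forallPn [j]; rewrite 2!negb_imply negbK => /and3P[jA _ e].
  by move: (none j); rewrite jA -[envy mu i j]/(envied mu j i) e.
have fA : f @: A \subset A.
  by apply/subsetP => y /imsetP [x xA ->]; exact: (f_envy x xA).1.
have [C [CA Cn fCC]] := closed_set_has_cycle An fA.
have finj : {in C &, injective f} by apply/imset_injP; rewrite fCC.
have C_envy x : x \in C -> envy mu x (f x).
  by move=> xC; exact: (f_envy x (subsetP CA x xC)).2.
case: undominated; exists (trade mu C f); split.
  exact: trade_stable mu_stable C_envy fCC finj.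
exact: trade_dominates C_envy Cn.
Qed.

(* If the ranking breaks ties against envious students, mu stays stable:
   a student i wanting j's seat either has lower priority than j, or is tied
   with j and envies j, and in both cases j comes first after tiebreaking. *)
Lemma stable_tiebreak mu (r : I -> nat) :
  stable P q pr mu -> (forall j i, envied mu j i -> r j < r i) ->
  stable P q (single_tiebreak r pr) mu.
Proof.
move=> [Hm HIR HNW Hfair] r_envy; split=> // [[s [i [j [ja ia Ri i_first]]]]].
have ji : j != i by apply: contraNneq ia => <-.
have nprij : ~~ pr s i j by apply/negP => prij; apply: Hfair; exists s, i, j.
suff j_first : single_tiebreak r pr s j i.
  by move: (ltn_trans i_first j_first); rewrite ltnn.
have [/(single_tiebreak_refines r (pr_weak s)) //| nprji] := boolP (pr s j i).
have [_ _ prNtr] := pr_weak s.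
apply: smo_order_tiebreak => //; first exact: weak_order_has_maximals.
  by move=> k; apply: contraTT => nprki; exact: prNtr nprki nprij.
apply: r_envy; apply/existsP; exists s.
by move: ja; rewrite inE => ->; rewrite (R_not_assigned Ri ia).
Qed.

End Envy.

Theorem corollary4 (I S : finType) (P : I -> rel (option S)) (q : S -> nat)
  (pr : S -> rel I) :
  3 <= #|I| ->
  (forall i, total_order (P i)) ->
  (forall s, 0 < q s) ->
  (forall s, weak_order (pr s)) ->
  forall mu : I -> option S,
    is_SOSM P q pr mu ->
    exists r : I -> nat, ranking r /\ is_SOSM P q (single_tiebreak r pr) mu.
Proof.
move=> _ P_total _ pr_weak mu mu_SOSM.
have [r [r_ranking r_envied]] :=
  topological_ranking (envied_has_maximals P_total pr_weak mu_SOSM)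
                      (envy_irrefl pr P_total mu).
exists r; split=> //; apply: (SOSM_refine _ mu_SOSM).
  by move=> s i j; exact: single_tiebreak_refines.
exact: (stable_tiebreak pr_weak mu_SOSM.1 r_envied).
Qed.
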